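(* Let $a\in[0,\infty)$, let $\theta:[0,1]\to[0,\infty]$ be a continuous and decreasing function that is not strictly decreasing, and let $\vartheta:[0,\infty]\to[0,1]$ be a continuous and decreasing function such that $O_{\theta,\vartheta}(x,y)=\vartheta(\theta(x)+\theta(y))$ defines an overlap function on $[0,1]^2$ and at least one of the following holds: (1) $\theta(x)=\frac{a}{2}$ if and only if $x=1$; (2) $\vartheta(x)=1$ if and only if $x\in[0,a]$. Then there do not exist a positive continuous t-norm $T$ and a pseudo automorphism $\mathcal{F}$ such that $O_{\theta,\vartheta}(x,y)=\mathcal{F}(T(x,y))$ for all $(x,y)\in[0,1]^2$.
   Context: ''Decreasing'' means non-increasing and ''increasing'' means non-decreasing. Arithmetic in $[0,\infty]$ uses $c+\infty=\infty$; continuity on $[0,\infty]$ refers to the usual topology of the extended half-line. An overlap function is a map $O:[0,1]^2\to[0,1]$ that is (O1) commutative, (O2) $O(x,y)=0$ iff $xy=0$, (O3) $O(x,y)=1$ iff $xy=1$, (O4) increasing in each variable, (O5) continuous. A t-norm is a commutative, associative map $T:[0,1]^2\to[0,1]$, increasing in each variable, with $T(x,1)=x$; it is positive if $T(x,y)=0$ implies $x=0$ or $y=0$. A pseudo automorphism is a continuous increasing map $\mathcal{F}:[0,1]\to[0,1]$ with $\mathcal{F}(x)=1$ iff $x=1$ and $\mathcal{F}(x)=0$ iff $x=0$. *)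

From HB Require Import structures.
From mathcomp Require Import all_boot all_order all_algebra.
From mathcomp Require Import all_classical all_reals all_analysis.
Set Implicit Arguments. Unset Strict Implicit. Unset Printing Implicit Defensive.
Import Order.TTheory GRing.Theory Num.Theory.
Import numFieldNormedType.Exports.
Local Open Scope classical_set_scope.
Local Open Scope ring_scope.

Definition I01 {R : realType} : set R := [set x | 0 <= x <= 1].
Definition I01sq {R : realType} : set (R * R) :=
  [set p | I01 p.1 /\ I01 p.2].
Definition EHL {R : realType} : set (\bar R) := [set x | (0 <= x)%E].

Definition is_overlap {R : realType} (O : R -> R -> R) : Prop :=
  (forall x y, I01 x -> I01 y -> I01 (O x y)) /\
  (forall x y, I01 x -> I01 y -> O x y = O y x) /\
  (forall x y, I01 x -> I01 y -> (O x y = 0 <-> x * y = 0)) /\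
  (forall x y, I01 x -> I01 y -> (O x y = 1 <-> x * y = 1)) /\
  (forall x y z, I01 x -> I01 y -> I01 z -> y <= z -> O x y <= O x z) /\
  (forall x y z, I01 x -> I01 y -> I01 z -> y <= z -> O y x <= O z x) /\
  {within I01sq, continuous (fun p : R * R => O p.1 p.2)}.

Definition is_tnorm {R : realType} (T : R -> R -> R) : Prop :=
  (forall x y, I01 x -> I01 y -> I01 (T x y)) /\
  (forall x y, I01 x -> I01 y -> T x y = T y x) /\
  (forall x y z, I01 x -> I01 y -> I01 z -> T x (T y z) = T (T x y) z) /\
  (forall x y z, I01 x -> I01 y -> I01 z -> y <= z -> T x y <= T x z) /\
  (forall x y z, I01 x -> I01 y -> I01 z -> y <= z -> T y x <= T z x) /\
  (forall x, I01 x -> T x 1 = x).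

Definition positive_tnorm {R : realType} (T : R -> R -> R) : Prop :=
  forall x y, I01 x -> I01 y -> T x y = 0 -> x = 0 \/ y = 0.

Definition continuous_on_sq {R : realType} (T : R -> R -> R) : Prop :=
  {within I01sq, continuous (fun p : R * R => T p.1 p.2)}.

Definition is_pseudo_automorphism {R : realType} (F : R -> R) : Prop :=
  [/\ (forall x, I01 x -> I01 (F x)),
      {within I01, continuous F},
      (forall x y, I01 x -> I01 y -> x <= y -> F x <= F y),
      (forall x, I01 x -> (F x = 1 <-> x = 1))
    & (forall x, I01 x -> (F x = 0 <-> x = 0))].

From HB Require Import structures.
From mathcomp Require Import all_boot all_order all_algebra.
From mathcomp Require Import all_classical all_reals all_analysis.
From mathcomp Require Import lra.
Import Order.TTheory GRing.Theory Num.Theory.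
Import numFieldNormedType.Exports.
Local Open Scope classical_set_scope.
Local Open Scope ring_scope.

(* Since T x 1 = x, the pseudo automorphism is F x = O x 1.  A flat piece
   theta p = theta q with 0 < p < q makes O p = O q; the intermediate value
   theorem for the slice T q gives y in (0, 1) with T q y = p, and
   associativity then yields O x y = O x 1 for every x in (0, q].  With
   d = theta y - theta 1 > 0 this says that vtheta is constant on
   [theta x + theta 1, theta x + theta 1 + d], so by continuity of theta the
   map F x = vtheta (theta x + theta 1) is locally constant on (0, q], hence
   equal to F q > 0 there, against F 0 = 0 and the continuity of F at 0. *)

Lemma I01_0 (R : realType) : I01 (0 : R).
Proof. by rewrite /I01 /= lexx ler01. Qed.

Lemma I01_1 (R : realType) : I01 (1 : R).
Proof. by rewrite /I01 /= lexx ler01. Qed.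

Lemma I01_Ioc {R : realType} {x : R} : 0 < x <= 1 -> I01 x.
Proof. by case/andP=> x0 x1; rewrite /I01 /= ltW. Qed.

Lemma within_cvgr_dist_lt {R : realType} {A : set R} {g : R -> R} {m : R} :
  g @ within A (nbhs m) --> g m -> forall e, 0 < e ->
  exists2 d, 0 < d & forall x, A x -> `|m - x| < d -> `|g m - g x| < e.
Proof.
move=> /cvgrPdist_lt gm e /gm; rewrite near_withinE => gnear.
have [d /= d0 gd] := (nbhs_ballP m _).1 gnear.
by exists d => // x Ax mx; exact: gd.
Qed.

(* The infimum of the points of [x, b] where f takes the value f b is x. *)
Lemma locally_constant_itv_eq {R : realType} {U : Type} {f : R -> U} {a b : R} :
  (forall c, a < c <= b -> exists2 e, 0 < e & forall y z,
     a < y <= b -> a < z <= b -> `|c - y| < e -> `|c - z| < e -> f y = f z) ->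
  forall x, a < x <= b -> f x = f b.
Proof.
move=> floc x /andP[ax xb].
pose S := [set y | x <= y <= b /\ f y = f b].
have Sb : S b by split; rewrite ?xb ?lexx.
have lbS : lbound S x by move=> y [/andP[]].
have hlS : has_lbound S by exists x.
have xm : x <= inf S by apply: lb_le_inf => //; exists b.
have mb : inf S <= b := ge_inf hlS Sb.
have [e e0 fm] := floc (inf S) (introT andP (conj (lt_le_trans ax xm) mb)).
have [y [/andP[xy yb] fyb] ym] := inf_adherent e0 (conj (ex_intro _ b Sb) hlS).
have my : inf S <= y := ge_inf hlS (conj (introT andP (conj xy yb)) fyb).
have Iy : a < y <= b by apply/andP; split; lra.
have my_e : `|inf S - y| < e by rewrite ltr_norml; apply/andP; split; lra.
case: (leP (inf S - e / 2) x) => [mex | xme].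
  rewrite -fyb; apply: fm => //; first by rewrite ax.
  by rewrite ltr_norml; apply/andP; split; lra.
have Sz : S (inf S - e / 2).
  split; first by apply/andP; split; lra.
  rewrite -fyb; apply: fm => //; first by apply/andP; split; lra.
  by rewrite ltr_norml; apply/andP; split; lra.
by exfalso; have := ge_inf hlS Sz; lra.
Qed.

Lemma decreasing_not_strict_flat {R : realType} {f : R -> \bar R} :
  (forall x y, I01 x -> I01 y -> x <= y -> (f y <= f x)%E) ->
  ~ (forall x y, I01 x -> I01 y -> x < y -> (f y < f x)%E) ->
  exists p q, [/\ 0 < p, p < q, q <= 1 & f p = f q].
Proof.
move=> fdec nstrict.
have [x [y [Ix Iy xy fxy]]] : exists x y, [/\ I01 x, I01 y, x < y & f y = f x].
  apply: contrapT => nflat; apply: nstrict => x y Ix Iy xy.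
  rewrite lt_neqAle fdec ?(ltW xy) // andbT; apply/eqP => fyx.
  by apply: nflat; exists x, y.
move: (Ix) (Iy) => /andP[x0 x1] /andP[y0 y1].
have Imid : I01 ((x + y) / 2) by apply/andP; split; lra.
exists ((x + y) / 2), y; split; [lra | lra | done |].
apply/le_anti/andP; split; first rewrite fxy.
all: by rewrite fdec //; lra.
Qed.

Section ContinuousTnorm.
Context {R : realType} {T : R -> R -> R}.
Hypotheses (T_tnorm : is_tnorm T) (T_cont : continuous_on_sq T).

Lemma tnorm_x0 x : I01 x -> T x 0 = 0.
Proof.
case: T_tnorm => TI [Tc [_ [Tmon [_ T1]]]] Ix.
have [I0 I1] := (I01_0 R, I01_1 R).
apply/le_anti/andP; split; last by case/andP: (TI x 0 Ix I0).
have /andP[_ x1] := Ix.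
by have := Tmon 0 x 1 I0 Ix I1 x1; rewrite T1 // Tc.
Qed.

Lemma tnorm_slice_continuous q : I01 q -> {within I01, continuous (T q)}.
Proof.
move=> Iq; apply/subspace_continuousP => z Iz.
have Tqz := (subspace_continuousP _ _).1 T_cont (q, z) (conj Iq Iz).
apply: (cvg_comp (fun y => (q, y)) _ _ Tqz) => P.
rewrite /= /within => /(cvg_pair (cvg_cst q) cvg_id).
by apply: (filterS (F := nbhs z)) => y /= + Iy; apply; split.
Qed.

Lemma tnorm_slice_onto {q v : R} : I01 q -> 0 <= v <= q ->
  exists2 z, I01 z & T q z = v.
Proof.
move=> Iq vq.
have [|z Iz Tqz] := IVT (v := v) ler01 (tnorm_slice_continuous _ Iq); last first.
  by exists z.
case: T_tnorm => _ [_ [_ [_ [_ T1]]]]; have /andP[q0 _] := Iq.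
by rewrite tnorm_x0 // T1 // (min_idPl q0) (max_idPr q0).
Qed.

End ContinuousTnorm.

Definition theta_overlap {R : realType} (theta : R -> \bar R)
  (vtheta : \bar R -> R) (x y : R) : R := vtheta (theta x + theta y)%E.

Section FactoredOverlap.
Context {R : realType} {theta : R -> \bar R} {vtheta : \bar R -> R}.
Context {T : R -> R -> R} {F : R -> R}.
Local Notation O := (theta_overlap theta vtheta).
Hypotheses (theta_ge0 : forall x, I01 x -> EHL (theta x))
  (theta_cont : {within I01, continuous theta})
  (theta_dec : forall x y, I01 x -> I01 y -> x <= y -> (theta y <= theta x)%E)
  (vtheta_dec : forall u v, EHL u -> EHL v -> (u <= v)%E -> vtheta v <= vtheta u)
  (O_overlap : is_overlap O)
  (T_tnorm : is_tnorm T) (T_cont : continuous_on_sq T)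
  (F_pseudo : is_pseudo_automorphism F)
  (O_FT : forall x y, I01 x -> I01 y -> O x y = F (T x y)).

Let I0 := I01_0 R.
Let I1 := I01_1 R.

Lemma F_O1 x : I01 x -> F x = O x 1.
Proof. by case: T_tnorm => _ [_ [_ [_ [_ T1]]]] Ix; rewrite O_FT ?T1. Qed.

Lemma theta_fin x : 0 < x <= 1 -> theta x \is a fin_num.
Proof.
move=> /[dup] /I01_Ioc Ix /andP[x0 x1].
case: O_overlap => _ [_ [Oeq0 _]].
rewrite ge0_fin_numE ?theta_ge0 // ltey; apply/eqP => thx.
have th0 : theta 0 = +oo%E by apply/eqP; rewrite -leye_eq -thx theta_dec // ltW.
have th1 : theta 1 != -oo%E by rewrite gt_eqF // (lt_le_trans _ (theta_ge0 _ I1)).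
have : O x 1 = O 0 1 by rewrite /theta_overlap thx th0 !addye.
move/eqP; rewrite (Oeq0 0 1 I0 I1).2 ?mul0r //.
by move/eqP/(Oeq0 x 1 Ix I1).1; rewrite mulr1 => x_eq0; rewrite x_eq0 ltxx in x0.
Qed.

Let th x := fine (theta x).
Let W s := vtheta s%:E.

Let h11 : (0 : R) < (1 : R) <= (1 : R).
Proof. by rewrite ltr01 lexx. Qed.

Lemma thetaE x : 0 < x <= 1 -> theta x = (th x)%:E.
Proof. by move=> x01; rewrite /th fineK ?theta_fin. Qed.

Lemma th_ge0 x : 0 < x <= 1 -> 0 <= th x.
Proof.
by move=> x01; rewrite -lee_fin -thetaE //; exact: theta_ge0 _ (I01_Ioc x01).
Qed.

Lemma th_dec x y : 0 < x -> x <= y -> y <= 1 -> th y <= th x.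
Proof.
move=> x0 xy y1; have x01 : 0 < x <= 1 by rewrite x0 (le_trans xy y1).
have y01 : 0 < y <= 1 by rewrite y1 (lt_le_trans x0 xy).
by rewrite -lee_fin -!thetaE //; exact: theta_dec (I01_Ioc x01) (I01_Ioc y01) xy.
Qed.

Lemma O_W x y : 0 < x <= 1 -> 0 < y <= 1 -> O x y = W (th x + th y).
Proof. by move=> x01 y01; rewrite /theta_overlap !thetaE. Qed.

Lemma W_dec s t : 0 <= s -> s <= t -> W t <= W s.
Proof.
by move=> s0 st; apply: vtheta_dec; rewrite /EHL /= lee_fin // (le_trans s0 st).
Qed.

Lemma F_W x : 0 < x <= 1 -> F x = W (th x + th 1).
Proof. by move=> x01; rewrite -O_W // -F_O1 //; exact: I01_Ioc. Qed.

Lemma th1_lt y : 0 < y < 1 -> th 1 < th y.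
Proof.
case/andP=> y0 y1; have y01 : 0 < y <= 1 by rewrite y0 ltW.
rewrite lt_neqAle (th_dec y 1 y0 (ltW y1) (lexx _)) andbT; apply/eqP => th1y.
case: O_overlap => _ [_ [_ [Oeq1 _]]].
have : O y 1 = O 1 1 by rewrite !O_W // th1y.
rewrite (Oeq1 1 1 I1 I1).2 ?mulr1 // => /(Oeq1 y 1 (I01_Ioc y01) I1).1.
by rewrite mulr1 => y_eq1; rewrite y_eq1 ltxx in y1.
Qed.

Lemma th_cvg (m : R) : 0 < m <= 1 -> th @ within I01 (nbhs m) --> th m.
Proof.
move=> m01; apply: fine_cvg; rewrite -thetaE //.
exact: (subspace_continuousP _ _).1 theta_cont m (I01_Ioc m01).
Qed.

Context {p q : R}.
Hypotheses (p_gt0 : 0 < p) (p_lt_q : p < q) (q_le1 : q <= 1)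
  (theta_pq : theta p = theta q).

Let q01 : 0 < q <= 1.
Proof. by rewrite q_le1 (lt_trans p_gt0 p_lt_q). Qed.

Lemma flat_slice_point : exists2 y, 0 < y < 1 & T q y = p.
Proof.
have Iq := I01_Ioc q01.
have p0q : 0 <= p <= q by rewrite ltW // ltW.
have [y /andP[y0 y1] Tqy] := tnorm_slice_onto T_tnorm T_cont Iq p0q.
exists y => //; case: T_tnorm => _ [_ [_ [_ [_ T1]]]].
rewrite !lt_neqAle y0 y1 !andbT; apply/andP; split; apply/eqP => ey.
  by move: Tqy p_gt0; rewrite -ey tnorm_x0 // => <-; rewrite ltxx.
by move: Tqy p_lt_q; rewrite ey T1 // => ->; rewrite ltxx.
Qed.

(* With T q z = x, associativity gives T x y = T p z, and O p = O q. *)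
Lemma O_flat_absorb y x : I01 y -> T q y = p -> 0 < x <= q -> O x y = O x 1.
Proof.
move=> Iy Tqy /andP[x0 xq].
have Ix : I01 x by apply: I01_Ioc; rewrite x0 (le_trans xq q_le1).
have Iq := I01_Ioc q01.
have x0q : 0 <= x <= q by rewrite ltW.
have [z Iz Tqz] := tnorm_slice_onto T_tnorm T_cont Iq x0q.
case: T_tnorm => TI [Tc [Ta _]].
have Txy : T x y = T p z by rewrite -Tqz -Ta // (Tc z) // Ta // Tqy.
have Ip : I01 p by apply: I01_Ioc; rewrite p_gt0 (le_trans (ltW p_lt_q) q_le1).
have Opq : O p z = O q z by rewrite /theta_overlap theta_pq.
by rewrite O_FT // Txy -O_FT // Opq O_FT // Tqz -F_O1.
Qed.

Let Ioc_q {x : R} : 0 < x <= q -> 0 < x <= 1.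
Proof. by case/andP=> x0 xq; rewrite x0 (le_trans xq q_le1). Qed.

Lemma W_plateau : exists2 d, 0 < d & forall x s, 0 < x <= q ->
  th x + th 1 <= s <= th x + th 1 + d -> W s = W (th x + th 1).
Proof.
have [y y01 Tqy] := flat_slice_point.
have y01' : 0 < y <= 1 by case/andP: y01 => y0 y1; rewrite y0 ltW.
exists (th y - th 1); first by rewrite subr_gt0 th1_lt.
move=> x s xq /andP[s_ge s_le]; have x01 := Ioc_q xq.
have s0 : 0 <= th x + th 1 by rewrite addr_ge0 ?th_ge0.
apply/le_anti/andP; split; first exact: W_dec.
have -> : W (th x + th 1) = W (th x + th y).
  by rewrite -!O_W // (O_flat_absorb _ _ (I01_Ioc y01') Tqy xq).
by apply: W_dec; [exact: le_trans s_ge | lra].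
Qed.

Lemma F_locally_constant c : 0 < c <= q -> exists2 e, 0 < e & forall u v,
  0 < u <= q -> 0 < v <= q -> `|c - u| < e -> `|c - v| < e -> F u = F v.
Proof.
move=> cq; have [d d0 Wd] := W_plateau; have d2 : 0 < d / 2 by lra.
have [e e0 th_near] := within_cvgr_dist_lt (th_cvg _ (Ioc_q cq)) _ d2.
exists e => // u v uq vq cu cv.
have := th_near u (I01_Ioc (Ioc_q uq)) cu.
have := th_near v (I01_Ioc (Ioc_q vq)) cv.
rewrite !ltr_norml !F_W ?Ioc_q // => /andP[? ?] /andP[? ?].
case: (leP (th v) (th u)) => [vu | /ltW uv].
  by apply: Wd => //; apply/andP; split; lra.
by apply/esym/Wd => //; apply/andP; split; lra.
Qed.

Lemma flat_theta_false : False.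
Proof.
case: F_pseudo => _ F_cont _ _ F_eq0.
have [_ F_right0 _] := (continuous_within_itvP F ltr01).1 F_cont.
have F_rightq : F @ 0^'+ --> F q.
  apply: cvg_near_cst; near=> x.
  apply: (locally_constant_itv_eq F_locally_constant).
  apply/andP; split; near: x; first exact: nbhs_right_gt.
  by apply: nbhs_right_le; case/andP: q01.
have : F q = 0.
  by rewrite -(cvg_unique (@Rhausdorff R) F_right0 F_rightq); apply/(F_eq0 0 I0).
move/(F_eq0 q (I01_Ioc q01)) => q_eq0.
by move: q01; rewrite q_eq0 ltxx.
Unshelve. all: by end_near.
Qed.

End FactoredOverlap.

Theorem proposition5p2 (R : realType) (a : R) (theta : R -> \bar R)
    (vtheta : \bar R -> R) :
  0 <= a ->
  (* theta : [0,1] -> [0,oo], continuous, decreasing, not strictly decreasing *)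
  (forall x, I01 x -> EHL (theta x)) ->
  {within I01, continuous theta} ->
  (forall x y, I01 x -> I01 y -> x <= y -> (theta y <= theta x)%E) ->
  ~ (forall x y, I01 x -> I01 y -> x < y -> (theta y < theta x)%E) ->
  (* vtheta : [0,oo] -> [0,1], continuous, decreasing *)
  (forall u, EHL u -> I01 (vtheta u)) ->
  {within EHL, continuous vtheta} ->
  (forall u v, EHL u -> EHL v -> (u <= v)%E -> vtheta v <= vtheta u) ->
  is_overlap (fun x y => vtheta (theta x + theta y)%E) ->
  ((forall x, I01 x -> (theta x = (a / 2)%:E <-> x = 1)) \/
   (forall u, EHL u -> (vtheta u = 1 <-> (u <= a%:E)%E))) ->
  ~ (exists (T : R -> R -> R) (F : R -> R),
       [/\ is_tnorm T, positive_tnorm T, continuous_on_sq T,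
           is_pseudo_automorphism F
         & forall x y, I01 x -> I01 y ->
             vtheta (theta x + theta y)%E = F (T x y)]).
Proof.
move=> _ theta_ge0 theta_cont theta_dec theta_not_strict _ _ vtheta_dec O_overlap _.
case=> T [F [T_tnorm _ T_cont F_pseudo O_FT]].
have [p [q [p_gt0 p_lt_q q_le1 theta_pq]]] :=
  decreasing_not_strict_flat theta_dec theta_not_strict.
exact: (flat_theta_false theta_ge0 theta_cont theta_dec vtheta_dec O_overlap
  T_tnorm T_cont F_pseudo O_FT p_gt0 p_lt_q q_le1 theta_pq).
Qed.
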